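(* Let $G$ be a finite group and let $p$ be a fixed prime divisor of $|G|$. Suppose that every maximal subgroup of $G$ is nilpotent or has order not divisible by $p$. Then for each prime divisor $q$ of $|G|$, $G$ is $q$-nilpotent or $q$-closed.
   Context: For a prime $q$, a finite group $G$ is $q$-nilpotent if it has a normal $q$-complement (a normal subgroup of order coprime to $q$ and index a power of $q$), and $q$-closed if its Sylow $q$-subgroup is normal in $G$. *)

From mathcomp Require Import all_boot all_fingroup all_solvable.
Set Implicit Arguments. Unset Strict Implicit. Unset Printing Implicit Defensive.
Local Open Scope group_scope.

Definition q_nilpotent (gT : finGroupType) (q : nat) (G : {set gT}) : Prop :=
  exists K : {group gT}, [/\ K <| G, coprime #|K| q & q.-nat #|G : K|].

Definition q_closed (gT : finGroupType) (q : nat) (G : {set gT}) : Prop :=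
  exists P : {group gT}, P \in 'Syl_q(G) /\ P <| G.

(* Call G p-good (nil_pdiv_proper p G) if every proper subgroup of G of
   order divisible by p is nilpotent.  The hypothesis makes G p-good, and
   p-goodness passes to quotients.  A p-good group is p-closed or
   p-nilpotent, by induction on |G|: one factors out O_p'(G) or O_p(G) and
   lifts back.  If both are trivial and a Sylow p-subgroup P is not normal,
   distinct Sylow p-subgroups meet trivially, which makes the nilpotent
   normaliser N_G(P) a Frobenius complement; its Frobenius kernel is then a
   nontrivial normal p'-subgroup.
   For a prime q <> p: if P is normal, every proper subgroup of G/P is
   nilpotent, so G/P is q-closed or q-nilpotent and this lifts to G.
   Otherwise G = K ><| P with K a normal p-complement; coprime action gives
   a P-invariant Sylow subgroup R of K, which P would centralise if R < K,
   so K has prime-power order and is the normal Sylow q-subgroup. *)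

From mathcomp Require Import all_boot all_fingroup all_solvable.
From mathcomp Require vcharacter.
Set Implicit Arguments. Unset Strict Implicit. Unset Printing Implicit Defensive.
Local Open Scope group_scope.

Definition nil_pdiv_proper (gT : finGroupType) (p : nat) (G : {set gT}) :=
  forall H : {group gT}, H \proper G -> p %| #|H| -> nilpotent H.

Lemma coprime_p'nat (p n : nat) : prime p -> coprime n p = p^'.-nat n.
Proof. by move=> p_pr; rewrite coprime_sym prime_coprime // p'natE. Qed.

Lemma nil_pdiv_proper_maximal (gT : finGroupType) (p : nat) (G : {group gT}) :
  (forall M : {group gT}, maximal M G -> nilpotent M \/ ~~ (p %| #|M|)) ->
  nil_pdiv_proper p G.
Proof.
move=> maxG H ltHG pH.
have [eHG | [M maxM sHM]] := maximal_exists (proper_sub ltHG).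
  by rewrite eHG properxx in ltHG.
have [nilM | p'M] := maxG M maxM; first exact: nilpotentS sHM nilM.
by rewrite (dvdn_trans pH (cardSg sHM)) in p'M.
Qed.

Lemma q_closed_Sylow_normal (gT : finGroupType) (p : nat) (G P : {group gT}) :
  q_closed p G -> p.-Sylow(G) P -> P <| G.
Proof.
case=> S [sylS nSG] sylP; rewrite inE in sylS.
have [x Gx ->] := Sylow_trans sylS sylP.
by rewrite (normP (subsetP (normal_norm nSG) x Gx)).
Qed.

Lemma subnorm_proper (gT : finGroupType) (G H : {group gT}) :
  H \subset G -> ~~ (H <| G) -> 'N_G(H) \proper G.
Proof.
move=> sHG nnH; rewrite properEneq subsetIl andbT; apply: contraNneq nnH => eNG.
by rewrite /normal sHG -eNG subsetIr.
Qed.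

Lemma pcore_sub_nil (gT : finGroupType) (pi : nat_pred) (N X : {group gT}) :
  nilpotent N -> X \subset N -> 'O_pi(X) \subset 'O_pi(N).
Proof.
move=> nilN sXN; rewrite (sub_Hall_pcore (nilpotent_pcore_Hall pi nilN)).
  exact: pcore_pgroup.
exact: subset_trans (pcore_sub _ _) sXN.
Qed.

Section Quotient.

Variables (gT : finGroupType) (p : nat) (G M : {group gT}).
Hypothesis nMG : M <| G.

Lemma quotient_Sylow_normal_join (P : {group gT}) :
  p.-Sylow(G) P -> q_closed p (G / M) -> M <*> P <| G.
Proof.
move=> sylP clGM.
have nMP : P \subset 'N(M) := subset_trans (pHall_sub sylP) (normal_norm nMG).
rewrite norm_joinEr // -quotientK // -(quotientGK nMG) cosetpre_normal.
exact: q_closed_Sylow_normal clGM (quotient_pHall nMP sylP).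
Qed.

Lemma q_nilpotent_quotient : q_nilpotent p (G / M) ->
  exists K : {group gT},
    [/\ K <| G, M \subset K, coprime #|K / M| p & p.-nat #|G : K|].
Proof.
case=> Kb [nKbG copKb pKb]; exists (coset M @*^-1 Kb)%G.
rewrite -{1 2}(quotientGK nMG) cosetpre_normal index_cosetpre cosetpreK.
by split=> //; apply: sub_cosetpre.
Qed.

Lemma nil_pdiv_proper_quotient (q : nat) :
  nil_pdiv_proper p G -> p %| #|M| \/ q = p -> nil_pdiv_proper q (G / M).
Proof.
move=> nilG pM Hb ltHbG qHb.
have ltHG : coset M @*^-1 Hb \proper G.
  by rewrite -(quotientGK nMG) cosetpre_proper.
rewrite -(cosetpreK Hb) quotient_nil // nilG // card_cosetpre.
by case: pM => [pM | qp]; [rewrite dvdn_mulr | rewrite dvdn_mull // -qp].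
Qed.

End Quotient.

Section CoprimeQuotient.

Variables (gT : finGroupType) (q : nat) (G M : {group gT}).
Hypotheses (q_pr : prime q) (nMG : M <| G) (q'M : q^'.-group M).

Lemma q_nilpotent_quotient_coprime : q_nilpotent q (G / M) -> q_nilpotent q G.
Proof.
case/(q_nilpotent_quotient nMG)=> K [nKG sMK copKM qGK]; exists K; split=> //.
have nMK := subset_trans (normal_sub nKG) (normal_norm nMG).
rewrite -(Lagrange sMK) -card_quotient // coprimeMl copKM andbT.
by rewrite coprime_p'nat.
Qed.

Lemma q_closed_quotient_coprime (Q : {group gT}) :
  q.-Sylow(G) Q -> (M <*> Q \proper G -> nilpotent (M <*> Q)) ->
  q_closed q (G / M) -> q_nilpotent q G \/ Q <| G.
Proof.
move=> sylQ nilMQ /(quotient_Sylow_normal_join nMG sylQ) nMQG.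
have [eMQG | ltMQG] := eqVproper (normal_sub nMQG).
  left; exists M; split=> //; first by rewrite coprime_p'nat.
  rewrite -eMQG norm_joinEr ?(subset_trans (pHall_sub sylQ) (normal_norm nMG)) //.
  by rewrite indexMg (pnat_dvd (dvdn_indexg Q M) (pHall_pgroup sylQ)).
right; have sylQMQ := pHall_subl (joing_subr M Q) (normal_sub nMQG) sylQ.
rewrite (nilpotent_Hall_pcore (nilMQ ltMQG) sylQMQ).
exact: char_normal_trans (pcore_char _ _) nMQG.
Qed.

End CoprimeQuotient.

Lemma Frobenius_normal_complement (gT : finGroupType) (G H : {group gT}) :
  H \proper G -> H :!=: 1 -> {in G, forall g, g \notin H -> H :&: H :^ g = 1} ->
  exists K : {group gT}, [/\ K <| G, K :!=: 1 & coprime #|K| #|H|].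
Proof.
move=> ltHG ntH tiH.
have frobG : [Frobenius G with complement H].
  apply/andP; split; first exact: proper_neq.
  apply/normedTI_P; split; first by rewrite setD_eq0 subG1.
    by rewrite normD1 subsetI (proper_sub ltHG) normG.
  move=> g Gg; apply: contraR => notHg.
  by rewrite -setI_eq0 conjD1g -setDIl tiH // setDv.
have [K frobK] := vcharacter.Frobenius_kernel_exists frobG.
have [defG ntK _ _ _] := Frobenius_context frobK.
by exists K; rewrite (Frobenius_coprime frobK); case/sdprod_context: defG.
Qed.

Section NilpotentProperSubgroups.

Variables (gT : finGroupType) (p : nat) (G : {group gT}).
Hypothesis nilG : nil_pdiv_proper p G.

Lemma nil_proper_over_pgroup (S H : {group gT}) :
  p.-group S -> S :!=: 1 -> S \subset H -> H \proper G -> nilpotent H.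
Proof.
move=> pS ntS sSH ltHG; apply: nilG ltHG _.
by have [_ pdvS _] := pgroup_pdiv pS ntS; apply: dvdn_trans pdvS (cardSg sSH).
Qed.

Lemma Sylow_setI_proper (P1 P2 : {group gT}) :
  p.-Sylow(G) P1 -> p.-Sylow(G) P2 -> P1 != P2 -> P1 :&: P2 \proper P1.
Proof.
move=> sylP1 sylP2 neP12; rewrite properEneq subsetIl andbT.
apply: contraNneq neP12 => eP1; apply/eqP/group_inj/esym.
have sP12 : P1 \subset P2 by rewrite -eP1 subsetIr.
exact: sub_pHall sylP1 (pHall_pgroup sylP2) sP12 (pHall_sub sylP2).
Qed.

Lemma Sylow_TI (P1 P2 : {group gT}) :
  'O_p(G) = 1 -> p.-Sylow(G) P1 -> p.-Sylow(G) P2 -> P1 != P2 -> P1 :&: P2 = 1.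
Proof.
move=> Op1; have [k] := ubnP (#|G| - #|P1 :&: P2|).
elim: k => // k IH in P1 P2 *; move=> ltk sylP1 sylP2 neP12.
apply/eqP/idPn => ntD; set D := (P1 :&: P2)%G.
have pD : p.-group D := pgroupS (subsetIl _ _) (pHall_pgroup sylP1).
have sDG : D \subset G := subset_trans (subsetIl _ _) (pHall_sub sylP1).
have nnD : ~~ (D <| G) by apply: contra ntD => nDG; rewrite -subG1 -Op1 pcore_max.
have ltNG := subnorm_proper sDG nnD.
have sDN : D \subset 'N_G(D) by rewrite subsetI sDG normG.
have nilN := nil_proper_over_pgroup pD ntD sDN ltNG.
have sOpG : 'O_p('N_G(D)) \subset G.
  exact: subset_trans (pcore_sub p _) (subsetIl _ _).
have [P3 sylP3 sOpP3] := Sylow_superset sOpG (pcore_pgroup p 'N_G(D)).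
(* D grows in its normalisers in P1 and P2, which both lie in the p-core of
   the nilpotent group N_G(D), hence in P3; maximality of |D| then forces
   P1 = P3 = P2. *)
have P3E (Pi : {group gT}) : p.-Sylow(G) Pi -> D \proper Pi -> P3 = Pi.
  move=> sylPi ltDPi; apply/eqP/idPn => neP3i.
  have ltDN := nilpotent_proper_norm (pgroup_nil (pHall_pgroup sylPi)) ltDPi.
  have sNP3i : 'N_Pi(D) \subset P3 :&: Pi.
    rewrite subsetI subsetIl andbT; apply: subset_trans sOpP3.
    rewrite (sub_Hall_pcore (nilpotent_pcore_Hall p nilN)); last first.
      exact: setSI _ (pHall_sub sylPi).
    exact: pgroupS (subsetIl _ _) (pHall_pgroup sylPi).
  have ltD3i : #|D| < #|P3 :&: Pi|.
    exact: leq_trans (proper_card ltDN) (subset_leq_card sNP3i).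
  have le3iG : #|P3 :&: Pi| <= #|G|.
    exact: subset_leq_card (subset_trans (subsetIr _ _) (pHall_sub sylPi)).
  have /IH/(_ sylP3 sylPi neP3i) tiP3i : #|G| - #|P3 :&: Pi| < k.
    by rewrite -ltnS (leq_trans _ ltk) // ltnS ltn_sub2l // (leq_trans ltD3i).
  by case/eqP: ntD; apply/trivgP; rewrite -tiP3i (subset_trans (proper_sub ltDN)).
have ltDP1 := Sylow_setI_proper sylP1 sylP2 neP12.
have ltDP2 : D \proper P2 by rewrite /= setIC Sylow_setI_proper // eq_sym.
by rewrite -(P3E P1 sylP1 ltDP1) -(P3E P2 sylP2 ltDP2) eqxx in neP12.
Qed.

Lemma cent_Sylows_sub_pcore (B P1 P2 : {group gT}) :
  p.-Sylow(G) P1 -> p.-Sylow(G) P2 -> P1 != P2 ->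
  p^'.-group B -> B \subset G -> P1 \subset 'C(B) -> P2 \subset 'C(B) ->
  B \subset 'O_p^'(G).
Proof.
move=> sylP1 sylP2 neP12 p'B sBG cBP1 cBP2; apply: pcore_max => //.
have ntP1 : P1 :!=: 1.
  apply: contraTneq (Sylow_setI_proper sylP1 sylP2 neP12) => ->.
  by rewrite (setIidPl (sub1G _)) properxx.
have sP1C : P1 \subset 'C_G(B) by rewrite subsetI (pHall_sub sylP1).
have sP2C : P2 \subset 'C_G(B) by rewrite subsetI (pHall_sub sylP2).
have [eCG | ltCG] := eqVproper (subsetIl G 'C(B)).
  by rewrite /normal sBG -eCG subIset // cent_sub orbT.
have nilC : nilpotent 'C_G(B).
  exact: nil_proper_over_pgroup (pHall_pgroup sylP1) ntP1 sP1C ltCG.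
have sylC (Pi : {group gT}) :
    p.-Sylow(G) Pi -> Pi \subset 'C_G(B) -> Pi :=: 'O_p('C_G(B)).
  move=> sylPi sPiC; have sylPiC := pHall_subl sPiC (subsetIl _ _) sylPi.
  by rewrite -(nilpotent_Hall_pcore nilC sylPiC).
by case/eqP: neP12; apply: group_inj; rewrite (sylC P1) // (sylC P2).
Qed.

Lemma nil_Sylow_normalizer (P : {group gT}) :
  p.-Sylow(G) P -> ~~ (P <| G) -> nilpotent 'N_G(P).
Proof.
move=> sylP nnP; have sPG := pHall_sub sylP.
have ntP : P :!=: 1 by apply: contraNneq nnP => ->; apply: normal1.
have sPN : P \subset 'N_G(P) by rewrite subsetI sPG normG.
have ltNG := subnorm_proper sPG nnP.
exact: nil_proper_over_pgroup (pHall_pgroup sylP) ntP sPN ltNG.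
Qed.

Lemma Sylow_normalizer_TI (P : {group gT}) (g : gT) :
  'O_p(G) = 1 -> 'O_p^'(G) = 1 -> p.-Sylow(G) P -> ~~ (P <| G) ->
  g \in G -> g \notin 'N_G(P) -> 'N_G(P) :&: 'N_G(P) :^ g = 1.
Proof.
move=> Op1 Op'1 sylP nnP Gg nNg; set N := 'N_G(P)%G.
have sylPg : p.-Sylow(G) (P :^ g)%G by rewrite pHallJ.
have nePg : P != (P :^ g)%G.
  apply: contraNneq nNg => ePg; rewrite inE Gg; apply/normP.
  by rewrite [in RHS]ePg.
have nilN : nilpotent N := nil_Sylow_normalizer sylP nnP.
have nilNg : nilpotent (N :^ g)%G by rewrite -(isog_nil (conj_isog N g)).
have sPN : P \subset N by rewrite subsetI (pHall_sub sylP) normG.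
have OpN : 'O_p(N) = P.
  by rewrite -(nilpotent_Hall_pcore nilN (pHall_subl sPN (subsetIl _ _) sylP)).
have OpNg : 'O_p(N :^ g) = P :^ g by rewrite pcoreJ OpN.
have cPNp' : P \subset 'C('O_p^'(N)).
  by have [_ _ cNp'Np _] := dprodP (nilpotent_pcoreC p nilN); rewrite -OpN centsC.
set X := (N :&: N :^ g)%G.
have nilX : nilpotent X := nilpotentS (subsetIl _ _) nilN.
have OpX : 'O_p(X) = 1.
  apply/trivgP; rewrite -(Sylow_TI Op1 sylP sylPg nePg) subsetI.
  apply/andP; split; first by rewrite -OpN pcore_sub_nil ?subsetIl.
  by rewrite /= -OpNg; apply: pcore_sub_nil nilNg (subsetIr _ _).
have Op'X : 'O_p^'(X) = 1.
  apply/trivgP; rewrite -Op'1.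
  rewrite (cent_Sylows_sub_pcore sylP sylPg nePg) ?pcore_pgroup //.
  - by rewrite (subset_trans (pcore_sub _ _)) // !subIset ?subxx.
  - exact: subset_trans cPNp' (centS (pcore_sub_nil _ nilN (subsetIl _ _))).
  apply: subset_trans (centS (pcore_sub_nil _ nilNg (subsetIr _ _))).
  by rewrite pcoreJ centJ conjSg.
by rewrite -(dprodW (nilpotent_pcoreC p nilX)) OpX Op'X mulg1.
Qed.

Lemma pcore_p'_nontrivial (P : {group gT}) :
  p.-Sylow(G) P -> ~~ (P <| G) -> 'O_p(G) = 1 -> 'O_p^'(G) != 1.
Proof.
move=> sylP nnP Op1; apply/eqP => Op'1.
have sPN : P \subset 'N_G(P) by rewrite subsetI (pHall_sub sylP) normG.
have ntP : P :!=: 1 by apply: contraNneq nnP => ->; apply: normal1.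
have ltNG := subnorm_proper (pHall_sub sylP) nnP.
have ntN : 'N_G(P) :!=: 1 := subG1_contra sPN ntP.
have [K [nKG ntK copKN]] := Frobenius_normal_complement ltNG ntN
  (fun g Gg nNg => Sylow_normalizer_TI Op1 Op'1 sylP nnP Gg nNg).
have copKP : coprime #|K| #|P| := coprime_dvdr (cardSg sPN) copKN.
have p'K : p^'.-group K := coprime_p'group copKP (pHall_pgroup sylP) ntP.
by case/negP: ntK; rewrite -subG1 -Op'1 pcore_max.
Qed.

Lemma q_nilpotent_quotient_pgroup (M P : {group gT}) :
  p.-Sylow(G) P -> ~~ (P <| G) -> M <| G -> p.-group M -> M :!=: 1 ->
  q_closed p (G / M) \/ q_nilpotent p (G / M) -> q_nilpotent p G.
Proof.
move=> sylP nnP nMG pM ntM; have [p_pr _ _] := pgroup_pdiv pM ntM.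
have [sPG pP] := (pHall_sub sylP, pHall_pgroup sylP).
have sMP : M \subset P := subset_trans (pcore_max pM nMG) (pcore_sub_Hall sylP).
case=> [clGM | /(q_nilpotent_quotient nMG)[K [nKG sMK copKM pGK]]].
  case/negP: nnP; rewrite -(joing_idPr sMP).
  exact: quotient_Sylow_normal_join clGM.
have [eKG | ltKG] := eqVproper (normal_sub nKG).
  have p'GM : p^'.-group (G / M) by rewrite -eKG /pgroup -coprime_p'nat.
  have sPM : P \subset M.
    rewrite -quotient_sub1 ?(subset_trans sPG (normal_norm nMG)) // subG1.
    rewrite trivg_card1; apply/eqP/(pnat_1 (quotient_pgroup M pP)).
    exact: pgroupS (quotientS M sPG) p'GM.
  have ePM : P :=: M by apply/eqP; rewrite eqEsubset sPM sMP.
  by rewrite ePM nMG in nnP.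
have nilK := nil_proper_over_pgroup pM ntM sMK ltKG.
exists 'O_p^'(K)%G; split; first exact: char_normal_trans (pcore_char _ _) nKG.
  by rewrite coprime_p'nat //; apply: pcore_pgroup.
have [_ _ /= pKOp'] := and3P (nilpotent_pcore_Hall p^' nilK).
by rewrite -(Lagrange_index (normal_sub nKG) (pcore_sub _ _)) pnatM pGK -pnatNK.
Qed.

Lemma primary_normal_p_complement (P K : {group gT}) :
  p.-Sylow(G) P -> ~~ (P <| G) -> K <| G -> p^'.-group K -> p.-nat #|G : K| ->
  exists r : nat, r.-group K.
Proof.
move=> sylP nnP nKG p'K pGK; have [sKG nKG'] := andP nKG.
have sPG := pHall_sub sylP; have pP := pHall_pgroup sylP.
have ntP : P :!=: 1 by apply: contraNneq nnP => ->; apply: normal1.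
have defG : K ><| P = G.
  by apply/(sdprod_normal_pHallP nKG sylP); rewrite /pHall sKG p'K pnatNK.
have nKP : P \subset 'N(K) := subset_trans sPG nKG'.
have copKP : coprime #|K| #|P| := p'nat_coprime p'K pP.
have not_cKP : ~~ (K \subset 'C(P)).
  apply: contra nnP => cKP; rewrite /normal sPG -(sdprodW defG).
  by rewrite mul_subG ?normG // (subset_trans cKP (cent_sub P)).
set r := pdiv #|K : 'C_K(P)|.
have ltCK : 1 < #|K : 'C_K(P)| by rewrite indexg_gt1 subsetI subxx.
(* As r divides |K : C_K(P)|, P cannot centralise a P-invariant Sylow
   r-subgroup R of K; so R <*> P is not nilpotent, which forces R = K. *)
have [R sylR nRP] := sol_coprime_Sylow_exists r (pgroup_sol pP) nKP copKP.
have [eRK | ltRK] := eqVproper (pHall_sub sylR).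
  by exists r; rewrite -eRK (pHall_pgroup sylR).
have copRP : coprime #|R| #|P| := coprime_dvdl (cardSg (pHall_sub sylR)) copKP.
have cardRP : #|R <*> P| = (#|R| * #|P|)%N.
  by rewrite norm_joinEr // TI_cardMg ?coprime_TIg.
have ltRPG : R <*> P \proper G.
  rewrite properEcard join_subG (subset_trans (pHall_sub sylR) sKG) sPG cardRP.
  by rewrite -(sdprod_card defG) ltn_pmul2r ?cardG_gt0 ?proper_card.
have nilRP := nil_proper_over_pgroup pP ntP (joing_subr _ _) ltRPG.
have cRP := sub_nilpotent_cent2 nilRP (joing_subl _ _) (joing_subr _ _) copRP.
have sRC : R \subset 'C_K(P) by rewrite subsetI (pHall_sub sylR) centsC.
have /and3P[_ _ r'KR] := sylR.
have : r^'.-nat #|K : 'C_K(P)|.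
  apply: pnat_dvd r'KR; rewrite -(Lagrange_index (subsetIl K 'C(P)) sRC).
  exact: dvdn_mulr.
by rewrite p'natE ?pdiv_prime // pdiv_dvd.
Qed.

End NilpotentProperSubgroups.

Lemma q_closed_or_q_nilpotent (gT : finGroupType) (p : nat) (G : {group gT}) :
  prime p -> nil_pdiv_proper p G -> q_closed p G \/ q_nilpotent p G.
Proof.
move=> p_pr; have [n] := ubnP #|G|; elim: n => // n IH in gT G *.
move=> ltGn nilG; have [P sylP] := Sylow_exists p G.
have [nPG | nnP] := boolP (P <| G); first by left; exists P; rewrite inE.
have IHquo (M : {group gT}) :
    M <| G -> M :!=: 1 -> q_closed p (G / M) \/ q_nilpotent p (G / M).
  move=> nMG ntM; apply: IH (nil_pdiv_proper_quotient nMG nilG (or_intror erefl)).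
  exact: leq_trans (ltn_quotient ntM (normal_sub nMG)) ltGn.
have [nOp nOp'] := (pcore_normal p G, pcore_normal p^' G).
have [pOp p'Op'] := (pcore_pgroup p G, pcore_pgroup p^' G).
right; have [Op'1 | ntOp'] := eqVneq 'O_p^'(G) 1.
  have ntOp : 'O_p(G) != 1.
    by apply/eqP => /(pcore_p'_nontrivial nilG sylP nnP); rewrite Op'1 eqxx.
  have IHOp := IHquo _ nOp ntOp.
  exact: (q_nilpotent_quotient_pgroup nilG sylP nnP nOp pOp ntOp IHOp).
have [clGM | nilGM] := IHquo _ nOp' ntOp'; last first.
  exact: q_nilpotent_quotient_coprime p_pr nOp' p'Op' nilGM.
have ntP : P :!=: 1 by apply: contraNneq nnP => ->; apply: normal1.
have sPOP := joing_subr 'O_p^'(G) P.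
have nilOP := nil_proper_over_pgroup nilG (pHall_pgroup sylP) ntP sPOP.
have [//|nPG] := q_closed_quotient_coprime p_pr nOp' p'Op' sylP nilOP clGM.
by rewrite nPG in nnP.
Qed.

Lemma q_closed_or_q_nilpotent_normal_Sylow (gT : finGroupType) (p q : nat)
    (G P : {group gT}) :
  prime q -> q != p -> nil_pdiv_proper p G ->
  p.-Sylow(G) P -> P <| G -> P :!=: 1 -> q_nilpotent q G \/ q_closed q G.
Proof.
move=> q_pr neqp nilG sylP nPG ntP; have pP := pHall_pgroup sylP.
have [_ pdvP _] := pgroup_pdiv pP ntP.
have nilGP := nil_pdiv_proper_quotient nPG nilG (or_introl pdvP) (q := q).
have q'P : q^'.-group P by rewrite /pgroup (pi_pnat pP) // !inE eq_sym.
have [Q sylQ] := Sylow_exists q G.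
case: (q_closed_or_q_nilpotent q_pr nilGP) => [clGP | nilGP']; last first.
  by left; apply: q_nilpotent_quotient_coprime q_pr nPG q'P nilGP'.
have nilPQ := nil_proper_over_pgroup nilG pP ntP (joing_subl P Q).
have [|nQG] := q_closed_quotient_coprime q_pr nPG q'P sylQ nilPQ clGP.
  by left.
by right; exists Q; rewrite inE.
Qed.

Theorem theorem1p9 (gT : finGroupType) (G : {group gT}) (p : nat) :
  prime p -> p %| #|G| ->
  (forall M : {group gT}, maximal M G -> nilpotent M \/ ~~ (p %| #|M|)) ->
  forall q : nat, prime q -> q %| #|G| -> q_nilpotent q G \/ q_closed q G.
Proof.
move=> p_pr pG maxG q q_pr qG.
have nilG := nil_pdiv_proper_maximal maxG.
have [P sylP] := Sylow_exists p G.
have [nPG | nnP] := boolP (P <| G).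
  have [-> | neqp] := eqVneq q p; first by right; exists P; rewrite inE.
  have ntP : P :!=: 1.
    by rewrite -cardG_gt1 (card_Hall sylP) p_part_gt1 mem_primes p_pr cardG_gt0.
  exact: q_closed_or_q_nilpotent_normal_Sylow q_pr neqp nilG sylP nPG ntP.
have [clG | [K [nKG copKp pGK]]] := q_closed_or_q_nilpotent p_pr nilG.
  by rewrite (q_closed_Sylow_normal clG sylP) in nnP.
have [-> | neqp] := eqVneq q p; first by left; exists K.
have p'K : p^'.-group K by rewrite /pgroup -coprime_p'nat.
have q'GK : q^'.-nat #|G : K| by rewrite (pi_pnat pGK) // !inE eq_sym.
have [r rK] := primary_normal_p_complement nilG sylP nnP nKG p'K pGK.
have qK : q %| #|K|.
  have copqGK := pnat_coprime (pnat_id q_pr) q'GK.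
  by rewrite -(Gauss_dvdl _ copqGK) Lagrange ?normal_sub.
have qrK : q.-group K by move: (pgroupP rK q q_pr qK); rewrite inE => /eqP->.
by right; exists K; rewrite inE /pHall normal_sub // qrK q'GK.
Qed.
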